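(* Let $\pi=N(0,\Sigma)$ on $\mathbb{R}^d$ with positive definite $\Sigma$, $Q=\Sigma^{-1}$ partitioned into blocks $(Q_{ij})_{i,j=1}^s$, and $K=\sqrt Q$ the symmetric square root. For $c\in\mathbb{R}^d$ let $f_c(x)=\exp(\langle c,Kx\rangle-\|c\|^2/2)$. For each block $i$ let $T^{(i)}=I-KD_iK$, where $D_i$ is the $d\times d$ block-diagonal matrix with $(Q_{ii})^{-1}$ in the $i$-th diagonal block and zeros elsewhere. Then for all $c\in\mathbb{R}^d$, $$(Pr_if_c)(x)=f_{T^{(i)}c}(x).$$
   Context: $Pr_i$ is the operator $(Pr_if)(x)=\int f(y_i,x_{-i})\,\pi(dy_i\mid x_{-i})$, i.e. integrating out the block $x_i\in\mathbb{R}^{r_i}$ of $x=(x_1,\dots,x_s)$ against its conditional distribution under $\pi$ given the other blocks. *)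

From HB Require Import structures.
From mathcomp Require Import all_boot all_order all_algebra.
From mathcomp Require Import all_classical all_reals all_analysis.
Set Implicit Arguments. Unset Strict Implicit. Unset Printing Implicit Defensive.
Import Order.TTheory GRing.Theory Num.Theory.
Local Open Scope ring_scope.

Section Defs.
Variable R : realType.

Definition setcoord (d : nat) (x : 'cV[R]_d) (j : 'I_d) (t : R) : 'cV[R]_d :=
  \col_k (if k == j then t else x k 0).

(* By Tonelli this is the Lebesgue integral over R^{|l|}. *)
Fixpoint integ_coords (d : nat) (l : seq 'I_d) (g : 'cV[R]_d -> \bar R)
    (x : 'cV[R]_d) : \bar R :=
  match l with
  | [::] => g x
  | j :: l' => (\int[@lebesgue_measure R]_t integ_coords l' g (setcoord x j t))%E
  end.

Definition gauss_density (d : nat) (Sigma : 'M[R]_d) (x : 'cV[R]_d) : R :=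
  (Num.sqrt ((2 * pi) ^+ d * \det Sigma))^-1
  * expR (- ((x^T *m invmx Sigma *m x) 0 0) / 2).

Definition block (d s : nat) (blk : 'I_d -> 'I_s) (i : 'I_s) : {set 'I_d} :=
  [set j | blk j == i].

(* Pr_i f (x) = \int f(y_i, x_{-i}) pi(dy_i | x_{-i}), with the conditional
   law given by the conditional density
   p(y_i, x_{-i}) / \int p(z_i, x_{-i}) dz_i. *)
Definition Pr (d s : nat) (blk : 'I_d -> 'I_s) (i : 'I_s) (Sigma : 'M[R]_d)
    (f : 'cV[R]_d -> R) (x : 'cV[R]_d) : R :=
  let l := enum (block blk i) in
  fine (integ_coords l (fun y => (f y * gauss_density Sigma y)%:E) x)
  / fine (integ_coords l (fun y => (gauss_density Sigma y)%:E) x).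

Definition fc (d : nat) (K : 'M[R]_d) (c : 'cV[R]_d) (x : 'cV[R]_d) : R :=
  expR ((c^T *m K *m x) 0 0 - (c^T *m c) 0 0 / 2).

Definition blocksel (d s : nat) (blk : 'I_d -> 'I_s) (i : 'I_s)
    : 'M[R]_(#|block blk i|, d) :=
  \matrix_(a, j) (enum_val a == j)%:R.

(* D_i : (Q_ii)^{-1} in the i-th diagonal block, zeros elsewhere. *)
Definition Dblock (d s : nat) (blk : 'I_d -> 'I_s) (i : 'I_s) (Q : 'M[R]_d)
    : 'M[R]_d :=
  let P := blocksel blk i in (P^T *m invmx (P *m Q *m P^T) *m P).

Definition Tmat (d s : nat) (blk : 'I_d -> 'I_s) (i : 'I_s) (Q K : 'M[R]_d)
    : 'M[R]_d := 1%:M - K *m Dblock blk i Q *m K.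

End Defs.

From HB Require Import structures.
From mathcomp Require Import all_boot all_order all_algebra.
From mathcomp Require Import all_classical all_reals all_analysis.
From mathcomp Require Import ring lra.
Set Implicit Arguments. Unset Strict Implicit. Unset Printing Implicit Defensive.
Import Order.TTheory GRing.Theory Num.Theory.
Local Open Scope ring_scope.

(* Write p for the N(0, Sigma) density, Q = Sigma^-1 = K K, D = D_i, and
   v = D K c.  Since D Q D = D, completing the square gives
     f_c(y) p(y) = f_{T c}(y) p(y - v).
   The vector v is supported on block i, and K T c = K c - Q D K c vanishes
   on block i because P Q D = P for the selector P of block i; hence
   f_{T c} does not depend on the block-i coordinates.  Integrating these
   out, f_{T c}(x) factors out of the numerator of Pr_i f_c and the shift
   by v does not change the Gaussian integral, which is finite and positive;
   so the quotient is f_{T c}(x).  All integrals are computed in closed form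
   one coordinate at a time: integrating C exp(<b, y> + e - y^T A y) in the
   coordinate j gives a function of the same form, with A replaced by its
   Schur complement with respect to j. *)

Section GaussianIntegral.
Variable R : realType.

Lemma integral_expR_quad (C a b g : R) : 0 <= C -> 0 < a ->
  (\int[@lebesgue_measure R]_t (C * expR (b * t + g - a * t ^+ 2))%:E
   = (C * Num.sqrt (pi / a) * expR (b ^+ 2 / (4 * a) + g))%:E)%E.
Proof.
move=> C0 a0.
set s := Num.sqrt ((2 * a)^-1).
have s2 : s ^+ 2 = (2 * a)^-1 by rewrite sqr_sqrtr // invr_ge0; lra.
have s0 : s != 0 by rewrite sqrtr_eq0 -ltNge invr_gt0 mulr_gt0.
have sq0 : 0 < Num.sqrt (pi / a) by rewrite sqrtr_gt0 divr_gt0 // pi_gt0.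
(* a multiple of the density of N(b / 2a, 1 / 2a) *)
have E t : C * expR (b * t + g - a * t ^+ 2) =
   C * Num.sqrt (pi / a) * expR (b ^+ 2 / (4 * a) + g) * normal_pdf (b / (2 * a)) s t.
  rewrite normal_pdfE // /normal_peak /normal_fun s2.
  have -> : (2 * a)^-1 * pi *+ 2 = pi / a by rewrite -mulr_natr; field; lra.
  rewrite -!mulrA; congr (_ * _).
  rewrite (mulrCA (Num.sqrt _)) (mulrA (Num.sqrt _)) mulfV ?gt_eqF // mul1r -expRD.
  by congr expR; rewrite -mulr_natr; field; lra.
under eq_integral do rewrite E EFinM.
rewrite ge0_integralZl_EFin ?integral_normal_pdf ?mule1 //.
- by move=> x _; rewrite lee_fin normal_pdf_ge0.
- by apply/measurable_realfun.measurable_EFinP; exact: measurable_normal_pdf.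
- by rewrite !mulr_ge0 ?expR_ge0 // ltW.
Qed.

Lemma integral_expR_quad_shift (C a b g s : R) : 0 <= C -> 0 < a ->
  (\int[@lebesgue_measure R]_t (C * expR (b * (t - s) + g - a * (t - s) ^+ 2))%:E
   = \int[@lebesgue_measure R]_t (C * expR (b * t + g - a * t ^+ 2))%:E)%E.
Proof.
move=> C0 a0.
have E t : b * (t - s) + g - a * (t - s) ^+ 2 =
  (b + 2 * a * s) * t + (g - b * s - a * s ^+ 2) - a * t ^+ 2 by ring.
under eq_integral do rewrite E.
rewrite !integral_expR_quad //; congr (EFin (_ * expR _)).
by field; rewrite gt_eqF.
Qed.

End GaussianIntegral.

Section GaussianFunctions.
Variables (R : realType) (d : nat).
Implicit Types (u v w x y z b : 'cV[R]_d) (A : 'M[R]_d).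

Definition dot u v : R := (u^T *m v) 0 0.
Definition qf A y : R := (y^T *m A *m y) 0 0.
Definition ej (j : 'I_d) : 'cV[R]_d := delta_mx j 0.

Lemma dotDr u v w : dot u (v + w) = dot u v + dot u w.
Proof. by rewrite /dot mulmxDr mxE. Qed.

Lemma dotDl u v w : dot (v + w) u = dot v u + dot w u.
Proof. by rewrite /dot linearD /= mulmxDl mxE. Qed.

Lemma dotZr a u v : dot u (a *: v) = a * dot u v.
Proof. by rewrite /dot -scalemxAr mxE. Qed.

Lemma dotZl a u v : dot (a *: u) v = a * dot u v.
Proof. by rewrite /dot linearZ /= -scalemxAl mxE. Qed.

Lemma dotNr u v : dot u (- v) = - dot u v.
Proof. by rewrite -scaleN1r dotZr mulN1r. Qed.

Lemma dotBr u v w : dot u (v - w) = dot u v - dot u w.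
Proof. by rewrite dotDr dotNr. Qed.

Lemma dotBl u v w : dot (v - w) u = dot v u - dot w u.
Proof. by rewrite dotDl -scaleN1r dotZl mulN1r. Qed.

Lemma dotC u v : dot u v = dot v u.
Proof. by rewrite /dot -[v^T *m u]trmxK trmx_mul trmxK [in RHS]mxE. Qed.

Lemma dot0l u : dot 0 u = 0.
Proof. by rewrite /dot trmx0 mul0mx mxE. Qed.

Lemma dot_ej u j : dot u (ej j) = u j 0.
Proof. by rewrite /dot /ej -colE !mxE. Qed.

Lemma dot_mulmx u A v : dot u (A *m v) = dot (A^T *m u) v.
Proof. by rewrite /dot trmx_mul trmxK mulmxA. Qed.

Lemma dot_mulmx_sym u A v : A^T = A -> dot (A *m u) v = dot u (A *m v).
Proof. by move=> sA; rewrite dot_mulmx sA. Qed.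

Lemma mulmx_ej A j k : (A *m ej j) k 0 = A k j.
Proof. by rewrite /ej -colE mxE. Qed.

Lemma dot_mulmx_ej A j y : A^T = A -> dot (A *m ej j) y = (A *m y) j 0.
Proof. by move=> sA; rewrite dot_mulmx_sym // dotC dot_ej. Qed.

Lemma qfE A y : qf A y = dot y (A *m y).
Proof. by rewrite /qf /dot mulmxA. Qed.

Lemma qf_ej A j : qf A (ej j) = A j j.
Proof. by rewrite qfE dotC dot_ej mulmx_ej. Qed.

Lemma qfZ A a y : qf A (a *: y) = a ^+ 2 * qf A y.
Proof. by rewrite !qfE -scalemxAr dotZl dotZr mulrA expr2. Qed.

Lemma qfZl A a y : qf (a *: A) y = a * qf A y.
Proof. by rewrite !qfE -scalemxAl dotZr. Qed.

Lemma qfD A y z : A^T = A ->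
  qf A (y + z) = qf A y + 2 * dot y (A *m z) + qf A z.
Proof.
move=> sA; have h : dot z (A *m y) = dot y (A *m z) by rewrite dotC dot_mulmx_sym.
by rewrite !qfE mulmxDr !dotDr !dotDl h; ring.
Qed.

Lemma qfB A y z : A^T = A ->
  qf A (y - z) = qf A y - 2 * dot y (A *m z) + qf A z.
Proof.
move=> sA; rewrite qfD // -scaleN1r qfZ -scalemxAr dotZr; ring.
Qed.

Lemma setcoordE x j t : setcoord x j t = setcoord x j 0 + t *: ej j.
Proof.
apply/matrixP => k l; rewrite !mxE (ord1 l) eqxx andbT.
by case: (k == j); rewrite ?mulr1 ?mulr0 ?add0r ?addr0.
Qed.

Lemma setcoord_id x j : setcoord x j (x j 0) = x.
Proof. by apply/matrixP => k l; rewrite !mxE (ord1 l); case: eqP => [->|]. Qed.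

Lemma setcoord_subZ x j t a : setcoord x j t - a *: ej j = setcoord x j (t - a).
Proof. by rewrite (setcoordE x j t) (setcoordE x j (t - a)) scalerBl addrA. Qed.

Lemma dot_setcoord w x j t : w j 0 = 0 -> dot w (setcoord x j t) = dot w x.
Proof.
move=> wj; rewrite -[in RHS](setcoord_id x j) [in RHS]setcoordE setcoordE.
by rewrite !dotDr !dotZr dot_ej wj !mulr0.
Qed.

Definition posdef A := forall x, x != 0 -> 0 < qf A x.

Lemma posdef_unitmx A : posdef A -> A \in unitmx.
Proof.
move=> pd; rewrite unitmxE unitfE; apply/negP => /det0P [v v0 vA].
have vT0 : v^T != 0 by rewrite -(inj_eq (@trmx_inj _ _ _)) trmxK trmx0.
by have := pd _ vT0; rewrite /qf trmxK vA mul0mx mxE ltxx.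
Qed.

Lemma posdef_invmx A : A^T = A -> posdef A -> posdef (invmx A).
Proof.
move=> sA pd y y0; have uA := posdef_unitmx pd.
set z := invmx A *m y.
have yE : y = A *m z by rewrite mulmxA mulmxV // mul1mx.
have z0 : z != 0 by apply: contra y0 => /eqP z0; rewrite yE z0 mulmx0.
rewrite /qf yE trmx_mul sA -!mulmxA (mulmxA (invmx A)) mulVmx // mul1mx.
by have := pd _ z0; rewrite /qf mulmxA.
Qed.

Lemma det_gt0_of_invmx_sqr A K : A \in unitmx -> K *m K = invmx A -> 0 < \det A.
Proof.
move=> uA KK.
have detAV : \det (invmx A) * \det A = 1 by rewrite -det_mulmx mulVmx ?det1.
have detV0 : 0 <= \det (invmx A) by rewrite -KK det_mulmx -expr2 sqr_ge0.
have detV0' : \det (invmx A) != 0.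
  by apply: contra_eq_neq detAV => ->; rewrite mul0r eq_sym oner_eq0.
have detVgt0 : 0 < \det (invmx A) by rewrite lt_def detV0' detV0.
by rewrite -(pmulr_rgt0 _ detVgt0) detAV ltr01.
Qed.

(* Schur complements degenerate along the coordinates already integrated out,
   so positivity is only required for vectors meeting the coordinates L still
   to be integrated. *)
Definition posdef_on A (L : seq 'I_d) :=
  forall y, has (fun k => y k 0 != 0) L -> 0 < qf A y.

Lemma posdef_on_diag A L j : posdef_on A L -> j \in L -> 0 < A j j.
Proof.
move=> pd jL; rewrite -qf_ej; apply: pd; apply/hasP; exists j => //.
by rewrite /ej mxE !eqxx oner_neq0.
Qed.

Lemma posdef_on_posdef A L : posdef A -> posdef_on A L.
Proof.
by move=> pd y /hasP [k _ yk]; apply: pd; apply: contra yk => /eqP ->; rewrite mxE.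
Qed.

Definition gauss_fun (C : R) A b (e : R) y : R := C * expR (dot b y + e - qf A y).

Lemma gauss_fun_section C A b e x j t : A^T = A ->
  gauss_fun C A b e (setcoord x j t) =
  C * expR ((b j 0 - 2 * (A *m setcoord x j 0) j 0) * t
     + (dot b (setcoord x j 0) + e - qf A (setcoord x j 0)) - A j j * t ^+ 2).
Proof.
move=> sA; rewrite /gauss_fun setcoordE qfD // dotDr dotZr dot_ej qfZ qf_ej.
rewrite -scalemxAr dotZr dot_mulmx sA dot_ej.
by congr (_ * expR _); ring.
Qed.

Lemma gauss_fun_shift C A b e y u : A^T = A ->
  gauss_fun C A b e (y - u) =
  gauss_fun C A (b + 2 *: (A *m u)) (e - dot b u - qf A u) y.
Proof.
move=> sA; rewrite /gauss_fun dotBr qfB // dotDl dotZl (dotC (A *m u) y).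
by congr (_ * expR _); ring.
Qed.

Lemma integral_gauss_fun_coordZ k C A b e x j : A^T = A -> 0 < A j j ->
  0 <= k -> 0 <= C ->
  (\int[@lebesgue_measure R]_t (k * gauss_fun C A b e (setcoord x j t))%:E =
   k%:E * \int[@lebesgue_measure R]_t (gauss_fun C A b e (setcoord x j t))%:E)%E.
Proof.
move=> sA a0 k0 C0.
under eq_integral do rewrite gauss_fun_section // mulrA.
under [in RHS]eq_integral do rewrite gauss_fun_section //.
by rewrite !integral_expR_quad ?mulr_ge0 // -EFinM !mulrA.
Qed.

Lemma integral_gauss_fun_coord_shift C A b e x j s : A^T = A -> 0 < A j j -> 0 <= C ->
  (\int[@lebesgue_measure R]_t (gauss_fun C A b e (setcoord x j (t - s)))%:E =
   \int[@lebesgue_measure R]_t (gauss_fun C A b e (setcoord x j t))%:E)%E.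
Proof.
move=> sA a0 C0.
under eq_integral do rewrite gauss_fun_section //.
under [in RHS]eq_integral do rewrite gauss_fun_section //.
exact: integral_expR_quad_shift.
Qed.

Definition schur A j : 'M[R]_d :=
  A - (A j j)^-1 *: ((A *m ej j) *m (A *m ej j)^T).
Definition schur_lin A b j : 'cV[R]_d := b - (b j 0 / A j j) *: (A *m ej j).

Lemma schur_sym A j : A^T = A -> (schur A j)^T = schur A j.
Proof. by move=> sA; rewrite /schur linearB /= linearZ /= trmx_mul trmxK sA. Qed.

Lemma qf_schur A j y :
  qf (schur A j) y = qf A y - (A j j)^-1 * dot (A *m ej j) y ^+ 2.
Proof.
rewrite /schur !qfE mulmxBl -scalemxAl dotBr dotZr; congr (_ - _ * _).
set u := A *m ej j.
rewrite /dot -mulmxA [y^T *m _]mulmxA mxE big_ord1 -/(dot y u) -/(dot u y).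
by rewrite dotC expr2.
Qed.

Lemma integral_gauss_fun_coord C A b e x j : A^T = A -> 0 < A j j -> 0 <= C ->
  (\int[@lebesgue_measure R]_t (gauss_fun C A b e (setcoord x j t))%:E =
   (gauss_fun (C * Num.sqrt (pi / A j j)) (schur A j) (schur_lin A b j)
       (e + b j 0 ^+ 2 / (4 * A j j)) x)%:E)%E.
Proof.
move=> sA a0 C0.
under eq_integral do rewrite gauss_fun_section //.
rewrite integral_expR_quad //; congr EFin.
rewrite /gauss_fun; congr (_ * expR _).
set y0 := setcoord x j 0.
have xE : x = y0 + x j 0 *: ej j by rewrite /y0 -setcoordE setcoord_id.
rewrite qf_schur /schur_lin dotBl dotZl !dot_mulmx_ej //.
rewrite [in RHS]xE dotDr dotZr dot_ej qfD // qfZ qf_ej mulmxDr -scalemxAr.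
rewrite [(A *m y0 + _) j 0]mxE [(_ *: (A *m ej j)) j 0]mxE mulmx_ej dotZr.
rewrite -dot_mulmx_ej // (dotC y0).
by field; rewrite gt_eqF.
Qed.

Lemma posdef_on_schur A j L : A^T = A -> j \notin L ->
  posdef_on A (j :: L) -> posdef_on (schur A j) L.
Proof.
move=> sA jL pd y /hasP [k kL yk].
have a0 : 0 < A j j by apply: posdef_on_diag pd _; rewrite inE eqxx.
pose t := - (A *m y) j 0 / A j j.
have -> : qf (schur A j) y = qf A (y + t *: ej j).
  rewrite qf_schur qfD // qfZ qf_ej -scalemxAr dotZr (dotC y) !dot_mulmx_ej //.
  by rewrite /t; field; rewrite gt_eqF.
apply: pd; apply/hasP; exists k; first by rewrite inE kL orbT.
have kj : k != j by apply: contraNneq jL => <-.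
by rewrite !mxE (negbTE kj) mulr0 addr0.
Qed.

Lemma integ_coords_gauss_fun (l L : seq 'I_d) C A b e :
  uniq (l ++ L) -> 0 < C -> A^T = A -> posdef_on A (l ++ L) ->
  exists C' A' b' e', [/\ 0 < C', A'^T = A', posdef_on A' L &
    forall x, integ_coords l (fun y => (gauss_fun C A b e y)%:E) x =
              (gauss_fun C' A' b' e' x)%:E].
Proof.
elim: l L => [|j l IH] L ul C0 sA pd; first by exists C, A, b, e.
have jlL : perm_eq (j :: l ++ L) (l ++ j :: L) by rewrite -cat1s perm_catCA.
have ul' : uniq (l ++ j :: L) by rewrite -(perm_uniq jlL).
have pd' : posdef_on A (l ++ j :: L) by move=> y; rewrite -(perm_has _ jlL); exact: pd.
have [C1 [A1 [b1 [e1 [C10 sA1 pd1 IHx]]]]] := IH _ ul' C0 sA pd'.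
have a0 : 0 < A1 j j by apply: posdef_on_diag pd1 _; rewrite inE eqxx.
have jL : j \notin L by move: ul; rewrite /= mem_cat negb_or => /andP [/andP [_ ->]].
exists (C1 * Num.sqrt (pi / A1 j j)), (schur A1 j), (schur_lin A1 b1 j),
  (e1 + b1 j 0 ^+ 2 / (4 * A1 j j)); split.
- by rewrite mulr_gt0 // sqrtr_gt0 divr_gt0 // pi_gt0.
- exact: schur_sym.
- exact: posdef_on_schur.
- move=> x /=; under eq_integral do rewrite IHx.
  by rewrite integral_gauss_fun_coord // ltW.
Qed.

Lemma integ_coords_gauss_fun_cons j l C A b e :
  uniq (j :: l) -> 0 < C -> A^T = A -> posdef_on A (j :: l) ->
  exists C' A' b' e', [/\ 0 < C', A'^T = A', 0 < A' j j &
    forall x, integ_coords l (fun y => (gauss_fun C A b e y)%:E) x =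
              (gauss_fun C' A' b' e' x)%:E].
Proof.
move=> ujl C0 sA pd.
have jl : perm_eq (j :: l) (l ++ [:: j]) by rewrite -cat1s perm_catC.
have ul : uniq (l ++ [:: j]) by rewrite -(perm_uniq jl).
have pdl : posdef_on A (l ++ [:: j]) by move=> y; rewrite -(perm_has _ jl); exact: pd.
have [C' [A' [b' [e' [C'0 sA' pd' IHx]]]]] := integ_coords_gauss_fun b e ul C0 sA pdl.
exists C', A', b', e'; split => //.
by apply: posdef_on_diag pd' _; rewrite inE.
Qed.

Lemma integ_coords_translate (l : seq 'I_d) (g : 'cV[R]_d -> \bar R) w z :
  (forall k, k \in l -> w k 0 = 0) ->
  integ_coords l (fun y => g (y + w)) z = integ_coords l g (z + w).
Proof.
elim: l z => [|j l IH] z wl //=.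
apply: eq_integral => t _.
rewrite IH => [|k kl]; last by apply: wl; rewrite inE kl orbT.
congr integ_coords; apply/matrixP => k m; rewrite !mxE (ord1 m).
by case: eqP => [->|] //; rewrite wl ?inE ?eqxx // addr0.
Qed.

Lemma integ_coords_mul_invariant_gauss_fun (l : seq 'I_d) (a : 'cV[R]_d -> R)
    C A b e x :
  uniq l -> 0 < C -> A^T = A -> posdef_on A l -> (forall y, 0 <= a y) ->
  (forall y k t, k \in l -> a (setcoord y k t) = a y) ->
  integ_coords l (fun y => (a y * gauss_fun C A b e y)%:E) x =
  ((a x)%:E * integ_coords l (fun y => (gauss_fun C A b e y)%:E) x)%E.
Proof.
elim: l x => [|j l IH] x ujl C0 sA pd a0 aI; first by rewrite /= EFinM.
have /andP [_ ul] := ujl.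
have pdl : posdef_on A l by move=> y yl; apply: pd; rewrite /= yl orbT.
have aIl y k t : k \in l -> a (setcoord y k t) = a y.
  by move=> kl; apply: aI; rewrite inE kl orbT.
have [C' [A' [b' [e' [C'0 sA' a'0 IHx]]]]] :=
  integ_coords_gauss_fun_cons b e ujl C0 sA pd.
rewrite /=; under eq_integral do rewrite IH // IHx aI ?inE ?eqxx // -EFinM.
under [in RHS]eq_integral do rewrite IHx.
exact: integral_gauss_fun_coordZ (ltW C'0).
Qed.

Lemma integ_coords_gauss_fun_shift (l : seq 'I_d) C A b e v x :
  uniq l -> 0 < C -> A^T = A -> posdef_on A l -> (forall k, k \notin l -> v k 0 = 0) ->
  integ_coords l (fun y => (gauss_fun C A b e (y - v))%:E) x =
  integ_coords l (fun y => (gauss_fun C A b e y)%:E) x.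
Proof.
elim: l b e v x => [|j l IH] b e v x ujl C0 sA pd vl.
  have -> : v = 0 by apply/matrixP => k m; rewrite (ord1 m) vl // mxE.
  by rewrite /= subr0.
have /andP [jl ul] := ujl.
have pdl : posdef_on A l by move=> y yl; apply: pd; rewrite /= yl orbT.
set u := v j 0 *: ej j.
have ul0 k : k \in l -> (- u) k 0 = 0.
  by move=> kl; rewrite !mxE; case: eqP kl jl => [-> ->|] //; rewrite mulr0 oppr0.
have vl' k : k \notin l -> (v - u) k 0 = 0.
  move=> kl; rewrite !mxE; case: eqP => [->|/eqP kj]; first by rewrite mulr1 subrr.
  by rewrite mulr0 subr0 vl // inE negb_or kj.
have inner t :
    integ_coords l (fun y => (gauss_fun C A b e (y - v))%:E) (setcoord x j t) =
    integ_coords l (fun y => (gauss_fun C A b e y)%:E) (setcoord x j (t - v j 0)).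
  have -> : (fun y => (gauss_fun C A b e (y - v))%:E) =
      (fun y => (gauss_fun C A (b + 2 *: (A *m u)) (e - dot b u - qf A u)
                   (y - (v - u)))%:E).
    by apply/funext => y; rewrite -gauss_fun_shift // -addrA -opprD subrK.
  rewrite IH // -setcoord_subZ -integ_coords_translate //.
  by congr integ_coords; apply/funext => y; rewrite gauss_fun_shift.
have [C' [A' [b' [e' [C'0 sA' a'0 IHx]]]]] :=
  integ_coords_gauss_fun_cons b e ujl C0 sA pd.
rewrite /=; under eq_integral do rewrite inner IHx.
under [in RHS]eq_integral do rewrite IHx.
exact: integral_gauss_fun_coord_shift (ltW C'0).
Qed.

Lemma integ_coords_mul_invariant_gauss_fun_shift (l : seq 'I_d)
    (a : 'cV[R]_d -> R) C A b e v x :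
  uniq l -> 0 < C -> A^T = A -> posdef_on A l -> (forall y, 0 <= a y) ->
  (forall y k t, k \in l -> a (setcoord y k t) = a y) ->
  (forall k, k \notin l -> v k 0 = 0) ->
  integ_coords l (fun y => (a y * gauss_fun C A b e (y - v))%:E) x =
  ((a x)%:E * integ_coords l (fun y => (gauss_fun C A b e y)%:E) x)%E.
Proof.
move=> ul C0 sA pd a0 aI vl.
under [fun y => _]funext do rewrite gauss_fun_shift //.
rewrite integ_coords_mul_invariant_gauss_fun //.
under [fun y => _]funext do rewrite -gauss_fun_shift //.
by rewrite integ_coords_gauss_fun_shift.
Qed.

Lemma gauss_densityE Sigma y : gauss_density Sigma y =
  gauss_fun (Num.sqrt ((2 * pi) ^+ d * \det Sigma))^-1 (2^-1 *: invmx Sigma) 0 0 y.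
Proof.
by rewrite /gauss_density /gauss_fun dot0l qfZl /qf; congr (_ * expR _); lra.
Qed.

Lemma fcE K c y : K^T = K -> fc K c y = expR (dot (K *m c) y - dot c c / 2).
Proof. by move=> sK; rewrite /fc /dot trmx_mul sK. Qed.

Lemma fc_setcoord K c y k t : K^T = K -> (K *m c) k 0 = 0 ->
  fc K c (setcoord y k t) = fc K c y.
Proof. by move=> sK Kc0; rewrite !fcE // dot_setcoord. Qed.

(* D Q D = D makes the constant terms match. *)
Lemma fc_completing_square K Q D c y : K^T = K -> K *m K = Q -> D^T = D ->
  D *m Q *m D = D ->
  fc K c y * expR (- qf Q y / 2) =
  fc K ((1%:M - K *m D *m K) *m c) y * expR (- qf Q (y - D *m K *m c) / 2).
Proof.
move=> sK KK sD DQD; set v := D *m K *m c.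
have sQ : Q^T = Q by rewrite -KK trmx_mul sK.
have Tc : (1%:M - K *m D *m K) *m c = c - K *m v by rewrite mulmxBl mul1mx !mulmxA.
have KTc : K *m (c - K *m v) = K *m c - Q *m v by rewrite mulmxBr mulmxA KK.
have vQv : dot v (Q *m v) = dot (K *m c) v.
  rewrite {1}/v -mulmxA dot_mulmx_sym //; congr dot.
  by rewrite /v !mulmxA DQD.
have cKv : dot c (K *m v) = dot (K *m c) v by rewrite dot_mulmx_sym.
have KvKv : dot (K *m v) (K *m v) = dot v (Q *m v).
  by rewrite dot_mulmx_sym // mulmxA KK.
rewrite Tc !fcE // -!expRD KTc qfB // !(dotBl, dotBr) (dotC (K *m v) c) cKv KvKv.
rewrite [qf Q v]qfE vQv (dotC (Q *m v)); congr expR; lra.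
Qed.

End GaussianFunctions.

Section Block.
Variables (R : realType) (d s : nat) (blk : 'I_d -> 'I_s) (i : 'I_s).
Local Notation P := (@blocksel R d s blk i).

Lemma blocksel_mul_tr : P *m P^T = 1%:M.
Proof.
apply/matrixP => a b; rewrite !mxE (bigD1 (enum_val a)) //= big1 ?addr0.
  by rewrite !mxE eqxx mul1r (inj_eq enum_val_inj) eq_sym.
by move=> j ja; rewrite !mxE eq_sym (negbTE ja) mul0r.
Qed.

Lemma blocksel_mulE (z : 'cV[R]_d) b : (P *m z) b 0 = z (enum_val b) 0.
Proof.
rewrite !mxE (bigD1 (enum_val b)) //= big1 ?addr0; first by rewrite !mxE eqxx mul1r.
by move=> j jb; rewrite !mxE eq_sym (negbTE jb) mul0r.
Qed.

Lemma tr_blocksel_mul_out (z : 'cV[R]_#|block blk i|) k :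
  k \notin block blk i -> (P^T *m z) k 0 = 0.
Proof.
move=> kb; rewrite !mxE big1 // => b _; rewrite !mxE.
have /negbTE -> : enum_val b != k by apply: contraNneq kb => <-; exact: enum_valP.
by rewrite mul0r.
Qed.

Variable Q : 'M[R]_d.
Hypotheses (sQ : Q^T = Q) (pdQ : posdef Q).
Local Notation D := (Dblock blk i Q).

Lemma blocksel_quad_unitmx : P *m Q *m P^T \in unitmx.
Proof.
apply: posdef_unitmx => z z0.
have Pz0 : P^T *m z != 0.
  apply: contra z0 => /eqP Pz.
  by rewrite -(mul1mx z) -blocksel_mul_tr -mulmxA Pz mulmx0.
by have := pdQ Pz0; rewrite /qf trmx_mul trmxK !mulmxA.
Qed.

Lemma Dblock_sym : D^T = D.
Proof.
have sM : (P *m Q *m P^T)^T = P *m Q *m P^T by rewrite !trmx_mul trmxK sQ mulmxA.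
by rewrite /Dblock !trmx_mul trmxK trmx_inv sM mulmxA.
Qed.

Lemma blocksel_Q_Dblock : P *m Q *m D = P.
Proof. by rewrite /Dblock !mulmxA mulmxV ?mul1mx // blocksel_quad_unitmx. Qed.

Lemma Dblock_Q_Dblock : D *m Q *m D = D.
Proof.
have -> : D *m Q *m D = P^T *m invmx (P *m Q *m P^T) *m (P *m Q *m D).
  by rewrite {1}/Dblock !mulmxA.
by rewrite blocksel_Q_Dblock.
Qed.

Lemma Dblock_mul_out (u : 'cV[R]_d) k : k \notin block blk i -> (D *m u) k 0 = 0.
Proof. by move=> kb; rewrite /Dblock -!mulmxA tr_blocksel_mul_out. Qed.

Lemma Q_Dblock_mul_in (u : 'cV[R]_d) k :
  k \in block blk i -> (Q *m (D *m u)) k 0 = u k 0.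
Proof.
move=> kb; rewrite -(enum_rankK_in kb kb) -!blocksel_mulE.
by rewrite mulmxA mulmxA blocksel_Q_Dblock.
Qed.

Lemma mul_Tmat_block (K : 'M[R]_d) (c : 'cV[R]_d) k : K *m K = Q -> k \in block blk i ->
  (K *m (Tmat blk i Q K *m c)) k 0 = 0.
Proof.
move=> KK kb; have -> : K *m (Tmat blk i Q K *m c) = K *m c - Q *m (D *m (K *m c)).
  by rewrite /Tmat mulmxBl mul1mx mulmxBr -KK !mulmxA.
by rewrite [LHS]mxE [X in _ + X]mxE Q_Dblock_mul_in // subrr.
Qed.

End Block.

Section ConditionalExpectation.
Variables (R : realType) (d s : nat) (blk : 'I_d -> 'I_s) (i : 'I_s).
Variables (Sigma K : 'M[R]_d).
Hypotheses (sSigma : Sigma^T = Sigma) (pdSigma : posdef Sigma).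
Hypotheses (sK : K^T = K) (KK : K *m K = invmx Sigma).
Local Notation Q := (invmx Sigma).
Local Notation l := (enum (block blk i)).

Let sQ : Q^T = Q. Proof. by rewrite -KK trmx_mul sK. Qed.

Let pdQ : posdef Q. Proof. exact: posdef_invmx. Qed.

Let gauss_const_gt0 : 0 < (Num.sqrt ((2 * pi) ^+ d * \det Sigma))^-1.
Proof.
have detS := det_gt0_of_invmx_sqr (posdef_unitmx pdSigma) KK.
by rewrite invr_gt0 sqrtr_gt0 mulr_gt0 // exprn_gt0 // mulr_gt0 // pi_gt0.
Qed.

Let sQ2 : (2^-1 *: Q)^T = 2^-1 *: Q. Proof. by rewrite linearZ /= sQ. Qed.

Let pdQ2 L : posdef_on (2^-1 *: Q) L.
Proof. by apply: posdef_on_posdef => y y0; rewrite qfZl mulr_gt0 ?invr_gt0 ?pdQ. Qed.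

Lemma fc_mul_gauss_density c y :
  fc K c y * gauss_density Sigma y =
  fc K (Tmat blk i Q K *m c) y * gauss_density Sigma (y - Dblock blk i Q *m K *m c).
Proof.
rewrite /gauss_density !(mulrCA (fc K _ _)).
by rewrite (fc_completing_square (D := Dblock blk i Q)) ?Dblock_sym ?Dblock_Q_Dblock.
Qed.

Lemma integ_coords_gauss_density_gt0 x : exists2 r : R, 0 < r &
  integ_coords l (fun y => (gauss_density Sigma y)%:E) x = r%:E.
Proof.
under [X in integ_coords _ X]funext do rewrite gauss_densityE.
have ul : uniq (l ++ [::]) by rewrite cats0 enum_uniq.
have [C' [A' [b' [e' [C'0 _ _ ->]]]]] :=
  integ_coords_gauss_fun 0 0 ul gauss_const_gt0 sQ2 (@pdQ2 (l ++ [::])).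
by exists (gauss_fun C' A' b' e' x); rewrite // mulr_gt0 // expR_gt0.
Qed.

Lemma integ_coords_fc_mul_gauss_density c x :
  integ_coords l (fun y => (fc K c y * gauss_density Sigma y)%:E) x =
  ((fc K (Tmat blk i Q K *m c) x)%:E *
   integ_coords l (fun y => (gauss_density Sigma y)%:E) x)%E.
Proof.
under [X in integ_coords _ X _ = _]funext
  do rewrite fc_mul_gauss_density gauss_densityE.
under [X in _ = (_ * integ_coords _ X _)%E]funext do rewrite gauss_densityE.
apply: integ_coords_mul_invariant_gauss_fun_shift => //.
- exact: enum_uniq.
- by move=> y; exact: expR_ge0.
- move=> y k t; rewrite mem_enum => kb.
  by apply: fc_setcoord => //; exact: mul_Tmat_block.
- by move=> k; rewrite mem_enum -mulmxA; exact: Dblock_mul_out.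
Qed.

End ConditionalExpectation.

Theorem lemma3 (R : realType) (d s : nat) (blk : 'I_d -> 'I_s) (i : 'I_s)
    (Sigma K : 'M[R]_d) :
  Sigma^T = Sigma ->
  (forall x : 'cV[R]_d, x != 0 -> 0 < (x^T *m Sigma *m x) 0 0) ->
  K^T = K ->
  (forall x : 'cV[R]_d, 0 <= (x^T *m K *m x) 0 0) ->
  K *m K = invmx Sigma ->
  forall (c x : 'cV[R]_d),
    Pr blk i Sigma (fc K c) x = fc K (Tmat blk i (invmx Sigma) K *m c) x.
Proof.
move=> sSigma pdSigma sK _ KK c x.
rewrite /Pr integ_coords_fc_mul_gauss_density //.
have [r r0 ->] := integ_coords_gauss_density_gt0 blk i sSigma pdSigma sK KK x.
by rewrite -EFinM /= mulfK // gt_eqF.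
Qed.
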